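(* For every graph $G$ on $n\ge 1$ vertices the following are equivalent: (a) $G$ belongs to CBU; (b) $G$ admits a homogeneous arc labeling; (c) $G$ is (isomorphic to) a subgraph of a graph $H_m^t$ obtained from the shift graph $H_m$ by iteratively adding $t$ false twins, for some values $m,t$ with $m+t\le n+1$; (d) $G$ belongs to $(2n-1)$-CBU.
   Context: Let $e_1,\ldots,e_d$ be the standard basis of $\mathbb{R}^d$. For $d\ge 1$, a graph belongs to $d$-CBU if one can assign to each vertex an axis-parallel box (product of $d$ closed intervals of positive length) in $\mathbb{R}^d$ such that the boxes have pairwise disjoint interiors, two distinct vertices are adjacent iff their boxes intersect, and any two intersecting boxes intersect in a $(d-1)$-dimensional box orthogonal to $e_1$. CBU is the union of $d$-CBU over all $d\ge 1$. A homogeneous arc labeling of $G$ is an acyclic orientation of $G$ together with a real label on each arc such that for every vertex all its outgoing arcs have the same label, all its incoming arcs have the same label, and the label of its incoming arcs is smaller than the label of its outgoing arcs. The shift graph $H_m$ has vertices the pairs $(i,j)$ with $1\le i<j\le m$, with $(i,j)$ and $(k,l)$ adjacent iff $j=k$ or $l=i$. Adding a false twin of a vertex $v$ means adding a new vertex $v'$ with $N(v')=N(v)$. *)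

From HB Require Import structures.
From mathcomp Require Import all_boot all_order all_algebra.
From mathcomp Require Import reals.
Set Implicit Arguments. Unset Strict Implicit. Unset Printing Implicit Defensive.
Import Order.TTheory GRing.Theory Num.Theory.
Local Open Scope ring_scope.

Definition simple_graph (V : finType) (adj : rel V) : Prop :=
  (forall u v, adj u v = adj v u) /\ (forall v, ~~ adj v v).

Section Boxes.
Variables (R : realType) (d : nat).

Definition in_box (lo hi : 'I_d -> R) (x : 'I_d -> R) : Prop :=
  forall i, lo i <= x i <= hi i.

Definition in_box_interior (lo hi : 'I_d -> R) (x : 'I_d -> R) : Prop :=
  forall i, lo i < x i < hi i.
End Boxes.

(* G is in d-CBU: coordinate "e_1" is the coordinate of index 0. *)
Definition dCBU (R : realType) (d : nat) (V : finType) (adj : rel V) : Prop :=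
  exists lo hi : V -> 'I_d -> R,
    (forall v i, lo v i < hi v i) /\
    (forall u v, u != v ->
       ~ (exists x, in_box_interior (lo u) (hi u) x /\ in_box_interior (lo v) (hi v) x)) /\
    (forall u v, u != v ->
       (adj u v <-> exists x, in_box (lo u) (hi u) x /\ in_box (lo v) (hi v) x)) /\
    (* intersecting boxes meet in a (d-1)-dimensional box orthogonal to e_1 *)
    (forall u v, u != v ->
       (exists x, in_box (lo u) (hi u) x /\ in_box (lo v) (hi v) x) ->
       exists lo' hi' : 'I_d -> R,
         (forall x, (in_box (lo u) (hi u) x /\ in_box (lo v) (hi v) x) <-> in_box lo' hi' x) /\
         (forall i : 'I_d, nat_of_ord i = 0%N -> lo' i = hi' i) /\
         (forall i : 'I_d, nat_of_ord i <> 0%N -> lo' i < hi' i)).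

Definition CBU (R : realType) (V : finType) (adj : rel V) : Prop :=
  exists d : nat, (1 <= d)%N /\ dCBU R d adj.

Definition orientation (V : finType) (adj : rel V) (o : rel V) : Prop :=
  (forall u v, o u v -> adj u v) /\
  (forall u v, adj u v -> (o u v && ~~ o v u) || (o v u && ~~ o u v)).

Definition acyclic_rel (V : finType) (o : rel V) : Prop :=
  forall u v, o u v -> ~~ connect o v u.

Definition homogeneous_arc_labeling (R : realType) (V : finType) (adj : rel V) : Prop :=
  exists (o : rel V) (lab : V -> V -> R),
    orientation adj o /\ acyclic_rel o /\
    (forall v w w', o v w -> o v w' -> lab v w = lab v w') /\
    (forall v w w', o w v -> o w' v -> lab w v = lab w' v) /\
    (forall v w w', o w v -> o v w' -> lab w v < lab v w').

Definition shift_vertex (m : nat) : predArgType :=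
  {p : 'I_m.+1 * 'I_m.+1 | (0 < p.1)%N && (p.1 < p.2)%N}.

Definition shift_adj (m : nat) : rel (shift_vertex m) :=
  fun x y => ((val x).2 == (val y).1) || ((val y).2 == (val x).1).

(* add a false twin (the new vertex None) of the vertex v *)
Definition add_false_twin (W : finType) (a : rel W) (v : W) : rel (option W) :=
  fun x y => a (odflt v x) (odflt v y).

Inductive twins_iter (W0 : finType) (a0 : rel W0) : nat -> forall W : finType, rel W -> Prop :=
| twins_iter0 : twins_iter a0 0 a0
| twins_iterS (t : nat) (W : finType) (a : rel W) (v : W) :
    twins_iter a0 t a -> twins_iter a0 t.+1 (add_false_twin a v).

(* G is isomorphic to a (not necessarily induced) subgraph of H *)
Definition subgraph_of (V W : finType) (adj : rel V) (b : rel W) : Prop :=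
  exists f : V -> W, injective f /\ (forall u v, adj u v -> b (f u) (f v)).

From HB Require Import structures.
From mathcomp Require Import all_boot all_order all_algebra.
From mathcomp Require Import reals.
From mathcomp Require Import zify lra.
Set Implicit Arguments. Unset Strict Implicit. Unset Printing Implicit Defensive.
Import Order.TTheory GRing.Theory Num.Theory.
Local Open Scope ring_scope.

(* Every condition is equivalent to the existence of touching intervals: intervals
   [inn v, out v] of positive length such that along every edge one of them ends
   exactly where the other begins.  Two boxes meeting in a facet orthogonal to e_1
   have touching first sides, so a CBU representation projects to such intervals.
   Orienting each edge from the interval that ends to the one that begins, labelled
   by the common endpoint, is a homogeneous arc labeling, and conversely the in- and
   out-labels of the vertices are touching intervals.  Touching intervals are the
   e_1-sides of boxes which, in the coordinate owned by a vertex v, are [0,2] for v,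
   [1,4] for its neighbours and [3,4] for all others: non-adjacent boxes are
   separated in the coordinate of one of them, so n <= 2n-1 coordinates suffice.
   Finally, numbering the distinct right endpoints 2, 3, ... and sending every other
   left endpoint to 1 maps G homomorphically into H_m with m at most one more than
   the number of images, and vertices with the same image become false twins. *)

Definition touching_intervals (R : numDomainType) (V : finType) (adj : rel V)
    (inn out : V -> R) : Prop :=
  (forall v, inn v < out v) /\ (forall u v, adj u v -> out u = inn v \/ out v = inn u).

Lemma acyclic_of_increasing (R : numDomainType) (V : finType) (o : rel V) (phi : V -> R) :
  {homo phi : u v / o u v >-> u < v} -> acyclic_rel o.
Proof.
move=> phi_o u v ouv; apply/negP => /connectP [p].
have path_le x q : path o x q -> phi x <= phi (last x q).
  elim: q x => [|y q IHq] x //= /andP [oxy /IHq]; exact/le_trans/ltW/phi_o.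
move=> /path_le + vu; rewrite -vu => /(lt_le_trans (phi_o _ _ ouv)).
by rewrite ltxx.
Qed.

Lemma hal_of_touching (R : realType) (V : finType) (adj : rel V) (inn out : V -> R) :
  (forall u v, adj u v = adj v u) -> touching_intervals adj inn out ->
  homogeneous_arc_labeling R adj.
Proof.
move=> adj_sym [inn_out touch].
pose o u v := adj u v && (out u == inn v).
have o_lt u v : o u v -> inn u < inn v by case/andP=> _ /eqP <-.
exists o, (fun u _ => out u); split; [split|split; [|split; [|split]]].
- by move=> u v /andP [].
- move=> u v uv; rewrite /o uv -adj_sym uv /=.
  have [e|e] := touch u v uv; rewrite e eqxx andbF ?orbF gt_eqF //.
  + by rewrite (lt_trans (inn_out u)) // e.
  + by rewrite (lt_trans (inn_out v)) // e.
- exact: (acyclic_of_increasing (phi := inn)).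
- by [].
- by move=> v w w' /andP [_ /eqP ->] /andP [_ /eqP ->].
- by move=> v w w' /andP [_ /eqP ->] _.
Qed.

Lemma touching_of_hal (R : realType) (V : finType) (adj : rel V) :
  homogeneous_arc_labeling R adj -> exists inn out : V -> R, touching_intervals adj inn out.
Proof.
move=> [o [lab [[_ o_or] [_ [out_eq [in_eq in_lt_out]]]]]].
pose out_lab v := if [pick w | o v w] is Some w then lab v w else 1.
pose inn v := if [pick w | o w v] is Some w then lab w v else out_lab v - 1.
pose out v := if [pick w | o v w] is Some w then lab v w else inn v + 1.
have arc_lab u v : o u v -> out u = lab u v /\ inn v = lab u v.
  move=> ouv; rewrite /out /inn; split.
  - by case: pickP => [w ouw|/(_ v)]; [exact: out_eq ouw ouv|rewrite ouv].
  - by case: pickP => [w owv|/(_ u)]; [exact: in_eq owv ouv|rewrite ouv].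
exists inn, out; split=> [v|u v /o_or].
- rewrite /out /inn /out_lab; case: (pickP [pred w | o v w]) => [w ovw|_] /=.
  + by case: pickP => [w' ow'v|_]; [exact: in_lt_out|rewrite gtrBl].
  + by rewrite ltrDl.
- by case/orP=> /andP [/arc_lab [-> ->] _]; [left|right].
Qed.

Lemma in_box_meet (R : realType) (d : nat) (l1 h1 l2 h2 x : 'I_d -> R) :
  in_box l1 h1 x /\ in_box l2 h2 x <->
  in_box (fun i => Num.max (l1 i) (l2 i)) (fun i => Num.min (h1 i) (h2 i)) x.
Proof.
split=> [[x1 x2] i|x12].
  by rewrite ge_max le_min; case/andP: (x1 i) => -> ->; case/andP: (x2 i) => -> ->.
by split=> i; case/andP: (x12 i); rewrite ge_max le_min => /andP [? ?] /andP [? ?]; apply/andP.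
Qed.

Lemma in_box_flat (R : realType) (d : nat) (lo hi lo' hi' x : 'I_d -> R) (i : 'I_d) :
  in_box lo hi x -> (forall y, in_box lo hi y -> in_box lo' hi' y) -> lo' i = hi' i ->
  lo i = hi i.
Proof.
move=> x_in sub flat_i.
have coord_i c : lo i <= c <= hi i -> c = lo' i.
  move=> c_in; pose y j := if j == i then c else x j.
  have /sub/(_ i) : in_box lo hi y.
    by move=> j; rewrite /y; case: eqP => [->|_]; [exact: c_in|exact: x_in].
  by rewrite /y eqxx -flat_i => /andP [lo'_c c_lo']; apply: le_anti; rewrite c_lo' lo'_c.
have lo_hi : lo i <= hi i by case/andP: (x_in i); apply: le_trans.
by rewrite [LHS]coord_i ?[RHS]coord_i // lexx lo_hi.
Qed.

Lemma max_eq_min_touch (R : realDomainType) (a1 b1 a2 b2 : R) :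
  a1 < b1 -> a2 < b2 -> Num.max a1 a2 = Num.min b1 b2 -> b1 = a2 \/ b2 = a1.
Proof.
move=> ab1 ab2; case: (leP a1 a2) => a12; case: (leP b1 b2) => b12 e.
- by left.
- by move: ab2; rewrite e ltxx.
- by move: ab1; rewrite e ltxx.
- by right.
Qed.

Lemma touching_of_dCBU (R : realType) (d : nat) (V : finType) (adj : rel V) :
  (forall v, ~~ adj v v) -> (0 < d)%N -> dCBU R d adj ->
  exists inn out : V -> R, touching_intervals adj inn out.
Proof.
move=> adj_irr d_gt0 [lo [hi [lo_hi [_ [adj_meet meet_flat]]]]].
pose i0 := Ordinal d_gt0.
exists (lo ^~ i0), (hi ^~ i0); split=> [v|u v uv]; first exact: lo_hi.
have neq_uv : u != v by apply: contraTneq uv => ->; apply: adj_irr.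
have [x ux_vx] := (adj_meet u v neq_uv).1 uv.
have [lo' [hi' [meet_box [flat0 _]]]] := meet_flat u v neq_uv (ex_intro _ x ux_vx).
apply: max_eq_min_touch (lo_hi u i0) (lo_hi v i0) _.
apply: (in_box_flat (proj1 (in_box_meet _ _ _ _ _) ux_vx)) (flat0 i0 erefl).
by move=> y /in_box_meet /meet_box.
Qed.

Lemma dCBU_of_boxes (R : realType) (d : nat) (V : finType) (adj : rel V)
    (lo hi : V -> 'I_d -> R) :
  (0 < d)%N -> (forall v i, lo v i < hi v i) ->
  (forall u v (i : 'I_d), u != v -> adj u v -> nat_of_ord i = 0%N ->
     Num.max (lo u i) (lo v i) = Num.min (hi u i) (hi v i)) ->
  (forall u v (i : 'I_d), u != v -> adj u v -> nat_of_ord i <> 0%N ->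
     Num.max (lo u i) (lo v i) < Num.min (hi u i) (hi v i)) ->
  (forall u v x, u != v -> ~~ adj u v -> in_box (lo u) (hi u) x -> ~ in_box (lo v) (hi v) x) ->
  dCBU R d adj.
Proof.
move=> d_gt0 lo_hi meet0 meet_pos apart.
have meet_adj u v : u != v -> (exists x, in_box (lo u) (hi u) x /\ in_box (lo v) (hi v) x) ->
    adj u v.
  by move=> uv [x [ux vx]]; apply/negPn/negP => nuv; apply: apart uv nuv ux vx.
have meet_box u v (i : 'I_d) : u != v -> adj u v ->
    Num.max (lo u i) (lo v i) <= Num.min (hi u i) (hi v i).
  move=> uv a; have [i0|/eqP i_neq0] := eqVneq (nat_of_ord i) 0%N.
  - by rewrite (meet0 _ _ _ uv a i0).
  - exact/ltW/meet_pos.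
exists lo, hi; split=> //; split; [|split].
- move=> u v uv [x [ux vx]].
  have weak y : in_box_interior (lo y) (hi y) x -> in_box (lo y) (hi y) x.
    by move=> yx i; case/andP: (yx i) => /ltW -> /ltW ->.
  have [a|na] := boolP (adj u v); last exact: apart uv na (weak _ ux) (weak _ vx).
  pose i0 := Ordinal d_gt0.
  have : Num.max (lo u i0) (lo v i0) < Num.min (hi u i0) (hi v i0).
    case/andP: (ux i0) => ? ?; case/andP: (vx i0) => ? ?.
    by apply: (@lt_trans _ _ (x i0)); rewrite ?gt_max ?lt_min; apply/andP.
  by rewrite (meet0 _ _ i0 uv a erefl) ltxx.
- move=> u v uv; split=> [a|]; last exact: meet_adj.
  exists (fun i => Num.max (lo u i) (lo v i)); apply/in_box_meet => i.
  by rewrite lexx meet_box.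
- move=> u v uv /(meet_adj _ _ uv) a.
  exists (fun i => Num.max (lo u i) (lo v i)), (fun i => Num.min (hi u i) (hi v i)).
  split=> [y|]; first exact: in_box_meet.
  by split=> i; [exact: meet0|exact: meet_pos].
Qed.

Section TouchingBoxes.
Variables (R : realType) (V : finType) (adj : rel V) (inn out : V -> R) (d : nat).
Hypothesis adj_sym : forall u v, adj u v = adj v u.
Hypothesis touch : touching_intervals adj inn out.

Definition owns (i : 'I_d) (c : V) : bool := (enum_rank c).+1 == i :> nat.

Definition box_lo (v : V) (i : 'I_d) : R :=
  if i == 0%N :> nat then inn v
  else if owns i v then 0 else if [exists c, owns i c && adj c v] then 1 else 3.

Definition box_hi (v : V) (i : 'I_d) : R :=
  if i == 0%N :> nat then out v else if owns i v then 2 else 4.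

Lemma box_lo_lt_hi v i : box_lo v i < box_hi v i.
Proof.
rewrite /box_lo /box_hi; case: ifP => _; first exact: touch.1.
by case: ifP => _; [|case: ifP => _]; lra.
Qed.

Lemma box_meet0 u v (i : 'I_d) : adj u v -> nat_of_ord i = 0%N ->
  Num.max (box_lo u i) (box_lo v i) = Num.min (box_hi u i) (box_hi v i).
Proof.
move=> uv i0; rewrite /box_lo /box_hi i0 /=.
case: (touch.2 u v uv) => e; case: leP => ?; case: leP => ?;
  have := touch.1 u; have := touch.1 v; lra.
Qed.

Lemma box_lo_lt_hi_adj u v (i : 'I_d) : adj v u -> nat_of_ord i <> 0%N ->
  box_lo u i < box_hi v i.
Proof.
move=> vu /eqP /negbTE i0; rewrite /box_lo /box_hi i0.
have [vi|] := boolP (owns i v); last by do 3?case: ifP => _; lra.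
have -> : [exists c, owns i c && adj c u] by apply/existsP; exists v; rewrite vi.
by case: ifP => _; lra.
Qed.

Lemma box_meet_pos u v (i : 'I_d) : adj u v -> nat_of_ord i <> 0%N ->
  Num.max (box_lo u i) (box_lo v i) < Num.min (box_hi u i) (box_hi v i).
Proof.
move=> uv i0; rewrite gt_max !lt_min !box_lo_lt_hi.
by rewrite !box_lo_lt_hi_adj // adj_sym.
Qed.

Hypothesis card_le_d : (#|V| <= d)%N.

Lemma box_apart u v x : u != v -> ~~ adj u v ->
  in_box (box_lo u) (box_hi u) x -> ~ in_box (box_lo v) (box_hi v) x.
Proof.
wlog lt_uv : u v / (enum_rank u < enum_rank v)%N.
  move=> wlog_uv neq_uv nuv ux vx.
  have [lt_uv|lt_vu|/ord_inj/enum_rank_inj eq_uv] := ltngtP (enum_rank u) (enum_rank v).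
  - exact: wlog_uv ux vx.
  - by apply: (wlog_uv v u lt_vu _ _ vx ux); rewrite 1?eq_sym -1?adj_sym.
  - by rewrite eq_uv eqxx in neq_uv.
move=> _ nuv ux vx.
have i_lt_d : ((enum_rank u).+1 < d)%N.
  exact: leq_trans (leq_ltn_trans lt_uv (ltn_ord _)) card_le_d.
pose i := Ordinal i_lt_d.
have ui : owns i u by rewrite /owns.
have vi : ~~ owns i v by rewrite /owns /= eqSS gtn_eqF.
have nbr : ~~ [exists c, owns i c && adj c v].
  apply/existsP => -[c /andP [ci cv]].
  have ec : c = u by apply: enum_rank_inj; apply: ord_inj; apply/eqP; rewrite -eqSS.
  by move: cv; rewrite ec (negbTE nuv).
move: (ux i) (vx i); rewrite /box_lo /box_hi /= ui (negbTE vi) (negbTE nbr).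
by move=> /andP [_ ?] /andP [? _]; lra.
Qed.

Lemma dCBU_of_touching : (0 < d)%N -> dCBU R d adj.
Proof.
move=> d_gt0; apply: (dCBU_of_boxes d_gt0 box_lo_lt_hi).
- by move=> u v i _; apply: box_meet0.
- by move=> u v i _; apply: box_meet_pos.
- exact: box_apart.
Qed.

End TouchingBoxes.

Lemma touching_intervals_hom (R : numDomainType) (V W : finType) (adj : rel V) (b : rel W)
    (f : V -> W) (inn out : W -> R) :
  {homo f : u v / adj u v >-> b u v} -> touching_intervals b inn out ->
  touching_intervals adj (inn \o f) (out \o f).
Proof.
by move=> f_hom [inn_out b_touch]; split=> [v|u v /f_hom /b_touch //]; apply: inn_out.
Qed.

Lemma shift_touching (R : numDomainType) (m : nat) :
  touching_intervals (@shift_adj m) (fun x => (val x).1%:R : R) (fun x => (val x).2%:R).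
Proof.
split=> [x|x y /orP [] /eqP ->]; [|by left|by right].
by rewrite ltr_nat; case/andP: (valP x).
Qed.

Lemma twins_iter_proj (W0 : finType) (a0 : rel W0) t (W : finType) (b : rel W) :
  twins_iter a0 t b -> exists pi : W -> W0, {homo pi : x y / b x y >-> a0 x y}.
Proof.
elim=> [|{}t {}W {}b v _ [pi pi_hom]]; first by exists id.
by exists (pi \o odflt v) => x y /pi_hom.
Qed.

Lemma touching_of_shift_twins (R : numDomainType) (V : finType) (adj : rel V) m t (W : finType)
    (b : rel W) :
  twins_iter (@shift_adj m) t b -> subgraph_of adj b ->
  exists inn out : V -> R, touching_intervals adj inn out.
Proof.
move=> /twins_iter_proj [pi pi_hom] [f [_ f_hom]]; do 2 eexists.
apply: (touching_intervals_hom f_hom); apply: (touching_intervals_hom pi_hom).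
exact: shift_touching.
Qed.

Section TouchingShift.
Variables (R : realDomainType) (V : finType) (adj : rel V) (inn out : V -> R).
Hypothesis touch : touching_intervals adj inn out.

Definition out_ends : seq R := sort <=%R (undup [seq out v | v <- enum V]).

Definition end_rank (x : R) : nat :=
  if x \in out_ends then (index x out_ends).+2 else 1.

Lemma mem_out_ends x : (x \in out_ends) = (x \in [seq out v | v <- enum V]).
Proof. by rewrite mem_sort mem_undup. Qed.

Lemma out_in_ends v : out v \in out_ends.
Proof. by rewrite mem_out_ends map_f ?mem_enum. Qed.

Lemma out_ends_uniq : uniq out_ends.
Proof. by rewrite sort_uniq undup_uniq. Qed.

Lemma out_ends_sorted : sorted <=%R out_ends.
Proof. by apply: sort_sorted; exact: le_total. Qed.

Lemma end_rank_lt x : (end_rank x < (size out_ends).+2)%N.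
Proof. by rewrite /end_rank; case: ifP => // x_in; rewrite !ltnS index_mem. Qed.

Definition end_ord (x : R) : 'I_(size out_ends).+2 := Ordinal (end_rank_lt x).

Lemma end_rank_mono x y : x < y -> y \in out_ends -> (end_rank x < end_rank y)%N.
Proof.
move=> lt_xy y_in; rewrite /end_rank y_in; case: ifP => // x_in; rewrite !ltnS ltnNge.
apply: contraTN lt_xy => le_yx; rewrite -leNgt.
exact: (sorted_leq_index le_trans lexx out_ends_sorted).
Qed.

Lemma shift_of_subproof v :
  (0 < end_rank (inn v))%N && (end_rank (inn v) < end_rank (out v))%N.
Proof.
by rewrite (end_rank_mono (touch.1 v) (out_in_ends v)) andbT /end_rank; case: ifP.
Qed.

Definition shift_of (v : V) : shift_vertex (size out_ends).+1 :=
  exist _ (end_ord (inn v), end_ord (out v)) (shift_of_subproof v).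

Lemma shift_of_hom : {homo shift_of : u v / adj u v >-> shift_adj u v}.
Proof. by move=> u v /touch.2 [] e; rewrite /shift_adj /= e eqxx ?orbT. Qed.

Lemma size_out_ends_le : (size out_ends <= #|shift_of @: [set: V]|)%N.
Proof.
pose ends_ord (k : 'I_(size out_ends)) := end_ord (nth 0 out_ends k).
have end_rank_nth (k : 'I_(size out_ends)) : end_rank (nth 0 out_ends k) = k.+2.
  by rewrite /end_rank mem_nth // index_uniq ?out_ends_uniq.
have ends_ord_inj : injective ends_ord.
  by move=> k k' /(congr1 val) /=; rewrite !end_rank_nth => -[] /ord_inj.
rewrite -[X in (X <= _)%N]card_ord -(card_imset _ ends_ord_inj).
apply: leq_trans (leq_imset_card (fun y => (val y).2) _).
apply/subset_leq_card/subsetP => _ /imsetP [k _ ->].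
have /mapP [w _ ew] : nth 0 out_ends k \in [seq out v | v <- enum V].
  by rewrite -mem_out_ends mem_nth.
by apply/imsetP; exists (shift_of w); [apply: imset_f|rewrite /ends_ord ew].
Qed.

End TouchingShift.

(* [x0] only provides a vertex to duplicate when no twin is needed. *)
Lemma twins_iter_embed (W0 : finType) (a0 : rel W0) (V : finType) (c : V -> W0) (x0 : V)
    (t : nat) (A : {set V}) :
  (#|A| <= #|c @: A| + t)%N ->
  exists (W : finType) (b : rel W) (f : V -> W),
    [/\ twins_iter a0 t b, {in A &, injective f}
      & {in A &, forall x y, b (f x) (f y) = a0 (c x) (c y)}].
Proof.
elim: t A => [|t IHt] A card_A.
  exists W0, a0, c; split=> //; first exact: twins_iter0.
  by apply/imset_injP; rewrite eqn_leq leq_imset_card -(addn0 #|c @: A|).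
case: (pickP [pred u | (u \in A) && (c u \in c @: (A :\ u))]) => [u|no_dup].
  case/andP=> uA /imsetP [u' u'A cuu'].
  have card_A' : (#|A :\ u| <= #|c @: (A :\ u)| + t)%N.
    have : (#|c @: A| <= #|c @: (A :\ u)|)%N.
      apply/subset_leq_card/subsetP => _ /imsetP [x xA ->].
      by case: (eqVneq x u) => [->|xu]; rewrite ?cuu' imset_f // !inE xu.
    by move: card_A; rewrite (cardsD1 u A) uA; lia.
  have [W [b [f [b_twins f_inj f_b]]]] := IHt _ card_A'.
  pose h x := if x == u then u' else x.
  have h_in x : x \in A -> h x \in A :\ u.
    by rewrite /h; case: eqP => // /eqP; rewrite !inE => ->.
  have c_h x : c (h x) = c x by rewrite /h; case: eqP => // ->.
  exists (option W), (add_false_twin b (f u')), (fun x => if x == u then None else Some (f x)).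
  split; first exact: twins_iterS.
  - move=> x y xA yA; case: (eqVneq x u) => [->|xu]; case: (eqVneq y u) => [->|yu] // [].
    by apply: f_inj; rewrite !inE ?xu ?yu.
  - move=> x y xA yA; rewrite -(c_h x) -(c_h y) -f_b ?h_in //.
    by rewrite /add_false_twin /h; case: eqP; case: eqP.
have c_inj : {in A &, injective c}.
  move=> x y xA yA cxy; apply/eqP/negPn/negP => xy.
  by have := no_dup x; rewrite /= xA cxy imset_f // !inE eq_sym xy.
have card_A' : (#|A| <= #|c @: A| + t)%N by rewrite (card_in_imset c_inj) leq_addr.
have [W [b [f [b_twins f_inj f_b]]]] := IHt _ card_A'.
exists (option W), (add_false_twin b (f x0)), (Some \o f); split; first exact: twins_iterS.
- by move=> x y xA yA [] /f_inj; apply.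
- exact: f_b.
Qed.

Lemma shift_twins_of_touching (R : realDomainType) (V : finType) (adj : rel V)
    (inn out : V -> R) :
  touching_intervals adj inn out -> (0 < #|V|)%N ->
  exists m t : nat, (m + t <= #|V| + 1)%N /\
    exists (W : finType) (b : rel W), twins_iter (@shift_adj m) t b /\ subgraph_of adj b.
Proof.
move=> touch /card_gt0P [x0 _].
have img_le : (#|shift_of touch @: [set: V]| <= #|V|)%N by rewrite -cardsT leq_imset_card.
exists (size (out_ends out)).+1, (#|V| - #|shift_of touch @: [set: V]|)%N; split.
  by have := size_out_ends_le touch; lia.
have card_le : (#|[set: V]| <= #|shift_of touch @: [set: V]|
                               + (#|V| - #|shift_of touch @: [set: V]|))%N.
  by rewrite cardsT; lia.
have [W [b [f [b_twins f_inj f_b]]]] := twins_iter_embed (@shift_adj _) x0 card_le.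
exists W, b; split=> //; exists f; split; first by move=> x y; apply: f_inj; rewrite inE.
by move=> u v uv; rewrite f_b ?inE //; exact: shift_of_hom.
Qed.

Theorem mainTheorem12 (R : realType) (V : finType) (adj : rel V) :
  simple_graph adj -> (0 < #|V|)%N ->
  let n := #|V| in
  (CBU R adj <-> homogeneous_arc_labeling R adj) /\
  (homogeneous_arc_labeling R adj <->
     exists m t : nat, (m + t <= n + 1)%N /\
       exists (W : finType) (b : rel W),
         twins_iter (@shift_adj m) t b /\ subgraph_of adj b) /\
  ((exists m t : nat, (m + t <= n + 1)%N /\
       exists (W : finType) (b : rel W),
         twins_iter (@shift_adj m) t b /\ subgraph_of adj b) <->
     dCBU R (2 * n - 1) adj).
Proof.
move=> [adj_sym adj_irr] V_gt0 n.
set touchable := exists inn out : V -> R, touching_intervals adj inn out.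
have d_gt0 : (0 < 2 * n - 1)%N by rewrite /n; lia.
have CBU_T : CBU R adj -> touchable.
  by case=> d [d_gt0' /(touching_of_dCBU adj_irr d_gt0')].
have dCBU_T : dCBU R (2 * n - 1) adj <-> touchable.
  split=> [dcbu|[inn [out touch]]]; first by apply: CBU_T; exists (2 * n - 1)%N.
  by apply: dCBU_of_touching adj_sym touch _ d_gt0; rewrite /n; lia.
have HAL_T : homogeneous_arc_labeling R adj <-> touchable.
  by split=> [/touching_of_hal|[inn [out /(hal_of_touching adj_sym)]]].
have shift_T : (exists m t : nat, (m + t <= n + 1)%N /\
       exists (W : finType) (b : rel W),
         twins_iter (@shift_adj m) t b /\ subgraph_of adj b) <-> touchable.
  split=> [[m [t [_ [W [b [b_twins b_adj]]]]]]|[inn [out touch]]].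
  - exact: touching_of_shift_twins b_twins b_adj.
  - exact: shift_twins_of_touching touch V_gt0.
have T_CBU : touchable -> CBU R adj by move=> /dCBU_T ?; exists (2 * n - 1)%N.
tauto.
Qed.
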